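(* There is a pseudo-double functor $\mathbb{E}\mathbf{ff}\to\mathbb{C}\mathbf{at}^\sharp$ which is the identity on objects and vertical morphisms, sends a $(c,d)$-effects handler $(s,\varphi)$ to the $(c,d)$-bicomodule with carrier $s\triangleleft d$, left coaction $(\varphi\triangleleft d)\circ(s\triangleleft\delta_d)\colon s\triangleleft d\to c\triangleleft s\triangleleft d$ and right coaction $s\triangleleft\delta_d\colon s\triangleleft d\to s\triangleleft d\triangleleft d$, and sends a square $\gamma\colon s\to s'$ over cofunctors $\alpha\colon c\to c'$, $\beta\colon d\to d'$ to the bicomodule map $\gamma\triangleleft\beta\colon s\triangleleft d\to s'\triangleleft d'$. This pseudo-double functor is faithful on the category of horizontal morphisms and squares between nonempty categories (i.e. $d\neq 0$). Moreover every $(c,0)$-bicomodule and every $(c,\mathcal{y})$-bicomodule lies in its essential image.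
   Context: Polynomials $p=\sum_{I\in p(1)}\mathcal{y}^{p[I]}$ form $\mathbf{Poly}$ with composition $\triangleleft$ of polynomial functors, unit $\mathcal{y}$ (one position, one direction); $0$ is the polynomial with no positions. Comonoids $(c,\epsilon_c\colon c\to\mathcal{y},\delta_c\colon c\to c\triangleleft c)$ in $(\mathbf{Poly},\mathcal{y},\triangleleft)$ are small categories; homomorphisms are cofunctors. A $(c,d)$-bicomodule is a polynomial with compatible coassociative counital coactions $p\to c\triangleleft p$, $p\to p\triangleleft d$. $\mathbb{C}\mathbf{at}^\sharp$ is the pseudo-double category with objects comonoids, vertical morphisms comonoid homomorphisms, horizontal morphisms bicomodules (composition $p\triangleleft_dq$ is the equalizer of $p\triangleleft q\rightrightarrows p\triangleleft d\triangleleft q$; identity on $c$ is $c$ with both coactions $\delta_c$), squares polynomial maps compatible with coactions and the vertical cofunctors. Effects handlers: for comonoids $c,d$, a $(c,d)$-effects handler is a polynomial $s$ with a morphism $\varphi\colon s\triangleleft d\to c\triangleleft s$ such that $(\epsilon_c\triangleleft s)\circ\varphi=s\triangleleft\epsilon_d$ and $(\delta_c\triangleleft s)\circ\varphi=(c\triangleleft\varphi)\circ(\varphi\triangleleft d)\circ(s\triangleleft\delta_d)$. The pseudo-double category $\mathbb{E}\mathbf{ff}$ has objects comonoids, vertical morphisms comonoid homomorphisms, horizontal morphisms from $c$ to $d$ the $(c,d)$-effects handlers, horizontal composite of $(s,\varphi)\colon(c,d)$ and $(t,\psi)\colon(d,e)$ the handler $s\triangleleft t$ with structure map $s\triangleleft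 t\triangleleft e\xrightarrow{s\triangleleft\psi}s\triangleleft d\triangleleft t\xrightarrow{\varphi\triangleleft t}c\triangleleft s\triangleleft t$, horizontal identity $(\mathcal{y},\mathrm{id}_c)$, and squares from $(s,\varphi)$ to $(s',\varphi')$ over $\alpha\colon c\to c'$, $\beta\colon d\to d'$ the polynomial maps $\gamma\colon s\to s'$ with $(\alpha\triangleleft\gamma)\circ\varphi=\varphi'\circ(\gamma\triangleleft\beta)$. *)

(** * Polynomials  p = sum_{I in p(1)} y^{p[I]} *)
Record poly : Type := Poly { pos : Type; dir : pos -> Type }.

Record pmap (p q : poly) : Type := PMap {
  mpos : pos p -> pos q;
  mdir : forall i : pos p, dir q (mpos i) -> dir p i }.
Arguments mpos {p q} _ _.
Arguments mdir {p q} _ _ _.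
Arguments PMap {p q} & mpos mdir.

Definition pid (p : poly) : pmap p p :=
  {| mpos := fun i => i; mdir := fun i d => d |}.

Definition pcomp {p q r : poly} (g : pmap q r) (f : pmap p q) : pmap p r :=
  {| mpos := fun i => mpos g (mpos f i);
     mdir := fun i d => mdir f i (mdir g (mpos f i) d) |}.

Declare Scope poly_scope.
Delimit Scope poly_scope with poly.
Open Scope poly_scope.
Infix "∘" := pcomp (at level 40, left associativity) : poly_scope.

Definition ypoly : poly := {| pos := unit; dir := fun _ => unit |}.
Definition zpoly : poly :=
  {| pos := Empty_set; dir := fun e => match e return Type with end |}.

Definition tri (p q : poly) : poly :=
  {| pos := {i : pos p & dir p i -> pos q};
     dir := fun x => {a : dir p (projT1 x) & dir q (projT2 x a)} |}.
Infix "◁" := tri (at level 35, right associativity) : poly_scope.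

Definition tri_map {p p' q q' : poly} (f : pmap p p') (g : pmap q q')
  : pmap (p ◁ q) (p' ◁ q') :=
  {| mpos := fun x : pos (p ◁ q) =>
       existT (fun i' => dir p' i' -> pos q') (mpos f (projT1 x))
              (fun a' => mpos g (projT2 x (mdir f (projT1 x) a')));
     mdir := fun (x : pos (p ◁ q)) e =>
       existT (fun a => dir q (projT2 x a)) (mdir f (projT1 x) (projT1 e))
              (mdir g _ (projT2 e)) |}.
Infix "⊲" := tri_map (at level 35, right associativity) : poly_scope.

Definition assoc (p q r : poly) : pmap ((p ◁ q) ◁ r) (p ◁ (q ◁ r)) :=
  {| mpos := fun x : pos ((p ◁ q) ◁ r) =>
       existT (fun i => dir p i -> pos (q ◁ r)) (projT1 (projT1 x))
         (fun a => existT (fun j => dir q j -> pos r) (projT2 (projT1 x) a)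
                     (fun b => projT2 x (existT _ a b)));
     mdir := fun (x : pos ((p ◁ q) ◁ r)) e =>
       existT (fun y => dir r (projT2 x y))
         (existT (fun a => dir q (projT2 (projT1 x) a)) (projT1 e) (projT1 (projT2 e)))
         (projT2 (projT2 e)) |}.

Definition assoc_inv (p q r : poly) : pmap (p ◁ (q ◁ r)) ((p ◁ q) ◁ r) :=
  {| mpos := fun x : pos (p ◁ (q ◁ r)) =>
       existT (fun ih => dir (p ◁ q) ih -> pos r)
         (existT (fun i => dir p i -> pos q) (projT1 x) (fun a => projT1 (projT2 x a)))
         (fun y => projT2 (projT2 x (projT1 y)) (projT2 y));
     mdir := fun (x : pos (p ◁ (q ◁ r))) e =>
       existT (fun a => dir (q ◁ r) (projT2 x a)) (projT1 (projT1 e))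
         (existT (fun b => dir r (projT2 (projT2 x (projT1 (projT1 e))) b))
            (projT2 (projT1 e)) (projT2 e)) |}.

Definition lunit (p : poly) : pmap (ypoly ◁ p) p :=
  {| mpos := fun x : pos (ypoly ◁ p) => projT2 x tt;
     mdir := fun (x : pos (ypoly ◁ p)) d => existT (fun u => dir p (projT2 x u)) tt d |}.
Definition lunit_inv (p : poly) : pmap p (ypoly ◁ p) :=
  {| mpos := fun i => existT (fun u : unit => unit -> pos p) tt (fun _ => i);
     mdir := fun i e => projT2 e |}.
Definition runit (p : poly) : pmap (p ◁ ypoly) p :=
  {| mpos := fun x : pos (p ◁ ypoly) => projT1 x;
     mdir := fun (x : pos (p ◁ ypoly)) a => existT (fun _ => unit) a tt |}.
Definition runit_inv (p : poly) : pmap p (p ◁ ypoly) :=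
  {| mpos := fun i => existT (fun i => dir p i -> unit) i (fun _ => tt);
     mdir := fun i e => projT1 e |}.

(** * Comonoids in (Poly, y, ◁)  (= small categories) *)
Record comonoid : Type := Comonoid {
  cp : poly; ceps : pmap cp ypoly; cdel : pmap cp (cp ◁ cp) }.

Definition IsComonoid (C : comonoid) : Prop :=
  runit (cp C) ∘ (pid (cp C) ⊲ ceps C) ∘ cdel C = pid (cp C) /\
  lunit (cp C) ∘ (ceps C ⊲ pid (cp C)) ∘ cdel C = pid (cp C) /\
  assoc (cp C) (cp C) (cp C) ∘ (cdel C ⊲ pid (cp C)) ∘ cdel C
    = (pid (cp C) ⊲ cdel C) ∘ cdel C.

Definition zero_comonoid : comonoid :=
  {| cp := zpoly;
     ceps := {| mpos := fun e : pos zpoly => match e with end;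
                mdir := fun e : pos zpoly => match e with end |};
     cdel := {| mpos := fun e : pos zpoly => match e with end;
                mdir := fun e : pos zpoly => match e with end |} |}.
Definition y_comonoid : comonoid :=
  {| cp := ypoly; ceps := pid ypoly; cdel := lunit_inv ypoly |}.

Definition IsCofunctor (C D : comonoid) (f : pmap (cp C) (cp D)) : Prop :=
  ceps D ∘ f = ceps C /\ cdel D ∘ f = (f ⊲ f) ∘ cdel C.

Definition IsBicomodule (C D : comonoid) (p : poly)
  (lam : pmap p (cp C ◁ p)) (rho : pmap p (p ◁ cp D)) : Prop :=
  lunit p ∘ (ceps C ⊲ pid p) ∘ lam = pid p /\
  assoc (cp C) (cp C) p ∘ (cdel C ⊲ pid p) ∘ lam = (pid (cp C) ⊲ lam) ∘ lam /\
  runit p ∘ (pid p ⊲ ceps D) ∘ rho = pid p /\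
  assoc p (cp D) (cp D) ∘ (rho ⊲ pid (cp D)) ∘ rho = (pid p ⊲ cdel D) ∘ rho /\
  assoc (cp C) p (cp D) ∘ (lam ⊲ pid (cp D)) ∘ rho = (pid (cp C) ⊲ rho) ∘ lam.

Definition IsBicomodSquare (C C' D D' : comonoid)
  (p : poly) (lam : pmap p (cp C ◁ p)) (rho : pmap p (p ◁ cp D))
  (p' : poly) (lam' : pmap p' (cp C' ◁ p')) (rho' : pmap p' (p' ◁ cp D'))
  (alpha : pmap (cp C) (cp C')) (beta : pmap (cp D) (cp D')) (g : pmap p p') : Prop :=
  (alpha ⊲ g) ∘ lam = lam' ∘ g /\ (g ⊲ beta) ∘ rho = rho' ∘ g.

(** The two parallel maps  p ◁ q  ⇉  (p ◁ d) ◁ q  whose equalizer is  p ◁_d q,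
    and the property of a morphism into p ◁ q to equalize them. *)
Definition Equalizes (D : comonoid) {x p q : poly}
  (rhoP : pmap p (p ◁ cp D)) (lamQ : pmap q (cp D ◁ q)) (h : pmap x (p ◁ q)) : Prop :=
  (rhoP ⊲ pid q) ∘ h = assoc_inv p (cp D) q ∘ (pid p ⊲ lamQ) ∘ h.

(** (r, lamR, rhoR) together with iota : r -> p ◁ q is a horizontal composite
    p ◁_D q in Cat#: iota is an equalizer in Poly of the two maps above, and
    the coactions of r are the ones induced on the equalizer. *)
Definition IsHComposite (C D E : comonoid)
  (p : poly) (lamP : pmap p (cp C ◁ p)) (rhoP : pmap p (p ◁ cp D))
  (q : poly) (lamQ : pmap q (cp D ◁ q)) (rhoQ : pmap q (q ◁ cp E))
  (r : poly) (lamR : pmap r (cp C ◁ r)) (rhoR : pmap r (r ◁ cp E))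
  (iota : pmap r (p ◁ q)) : Prop :=
  Equalizes D rhoP lamQ iota /\
  (forall (x : poly) (h : pmap x (p ◁ q)), Equalizes D rhoP lamQ h ->
     exists! h' : pmap x r, iota ∘ h' = h) /\
  (pid (cp C) ⊲ iota) ∘ lamR = assoc (cp C) p q ∘ (lamP ⊲ pid q) ∘ iota /\
  (iota ⊲ pid (cp E)) ∘ rhoR = assoc_inv p q (cp E) ∘ (pid p ⊲ rhoQ) ∘ iota.

Definition IsHandler (C D : comonoid) (s : poly) (phi : pmap (s ◁ cp D) (cp C ◁ s)) : Prop :=
  lunit s ∘ (ceps C ⊲ pid s) ∘ phi = runit s ∘ (pid s ⊲ ceps D) /\
  assoc (cp C) (cp C) s ∘ (cdel C ⊲ pid s) ∘ phi
    = (pid (cp C) ⊲ phi) ∘ assoc (cp C) s (cp D) ∘ (phi ⊲ pid (cp D))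
        ∘ assoc_inv s (cp D) (cp D) ∘ (pid s ⊲ cdel D).

Definition IsEffSquare (C C' D D' : comonoid)
  (s : poly) (phi : pmap (s ◁ cp D) (cp C ◁ s))
  (s' : poly) (phi' : pmap (s' ◁ cp D') (cp C' ◁ s'))
  (alpha : pmap (cp C) (cp C')) (beta : pmap (cp D) (cp D')) (gamma : pmap s s') : Prop :=
  (alpha ⊲ gamma) ∘ phi = phi' ∘ (gamma ⊲ beta).

Definition hcomp_phi (C D E : comonoid) (s : poly) (phi : pmap (s ◁ cp D) (cp C ◁ s))
  (t : poly) (psi : pmap (t ◁ cp E) (cp D ◁ t)) : pmap ((s ◁ t) ◁ cp E) (cp C ◁ (s ◁ t)) :=
  assoc (cp C) s t ∘ (phi ⊲ pid t) ∘ assoc_inv s (cp D) t ∘ (pid s ⊲ psi) ∘ assoc s t (cp E).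

Definition hid_phi (C : comonoid) : pmap (ypoly ◁ cp C) (cp C ◁ ypoly) :=
  runit_inv (cp C) ∘ lunit (cp C).

Definition F_rho (D : comonoid) (s : poly) : pmap (s ◁ cp D) ((s ◁ cp D) ◁ cp D) :=
  assoc_inv s (cp D) (cp D) ∘ (pid s ⊲ cdel D).
Definition F_lam (C D : comonoid) (s : poly) (phi : pmap (s ◁ cp D) (cp C ◁ s))
  : pmap (s ◁ cp D) (cp C ◁ (s ◁ cp D)) :=
  assoc (cp C) s (cp D) ∘ (phi ⊲ pid (cp D)) ∘ assoc_inv s (cp D) (cp D) ∘ (pid s ⊲ cdel D).
Definition F_sq {s s' : poly} (D D' : comonoid) (gamma : pmap s s') (beta : pmap (cp D) (cp D'))
  : pmap (s ◁ cp D) (s' ◁ cp D') := gamma ⊲ beta.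

(* F(s, φ) is the cofree right d-comodule s ◁ d, whose left c-coaction transports φ
   along the comultiplication of d; the two handler laws of φ become exactly the laws of a
   bicomodule.  For a left d-comodule (q, λ), the map s ◁ λ exhibits s ◁ q as the cotensor
   product (s ◁ d) ◁_d q, with retraction s ◁ (ε ◁ q).  For q = t ◁ e this is the compositor
   F(s) ◁_d F(t) ≅ F(s ◁ t); the unitor is the left unitor of ◁.
   Faithfulness: γ is recovered from γ ◁ β by restricting along the section s → s ◁ d at a
   point of d and projecting with s' ◁ ε.  For d = 0 a right comodule p has no directions,
   so p ≅ p ◁ 0; for d = y the right coaction is the unitor, and φ := λ ∘ runit. *)

From Stdlib Require Import FunctionalExtensionality.

Lemma pmap_ext {p q : poly} (f g : pmap p q) :
  (forall i, existT (fun j => dir q j -> dir p i) (mpos f i) (mdir f i)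
           = existT (fun j => dir q j -> dir p i) (mpos g i) (mdir g i)) -> f = g.
Proof.
  destruct f as [f1 f2], g as [g1 g2]; cbn; intros E.
  assert (E' : (fun i => existT (fun j => dir q j -> dir p i) (f1 i) (f2 i))
             = (fun i => existT (fun j => dir q j -> dir p i) (g1 i) (g2 i)))
    by (apply functional_extensionality_dep; exact E).
  exact (f_equal (fun F => PMap (fun i => projT1 (F i)) (fun i => projT2 (F i))) E').
Qed.

Ltac under_binders f k :=
  lazymatch type of f with
  | forall x : ?A, _ => constr:(fun x : A => ltac:(let r := under_binders (f x) k in exact r))
  | _ => k f
  end.

Ltac under_binders2 f g k :=
  lazymatch type of f with
  | forall x : ?A, _ =>
      constr:(fun x : A => ltac:(let r := under_binders2 (f x) (g x) k in exact r))
  | _ => k f g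
  end.

Ltac curried f :=
  lazymatch type of f with
  | forall y : @sigT ?B ?C, _ => constr:(fun (a : B) (b : C a) => f (existT C a b))
  | forall y : unit, _ => constr:(f tt)
  | forall x : ?A, _ => constr:(fun x : A => ltac:(let r := curried (f x) in exact r))
  end.

Ltac uncurried f g :=
  lazymatch type of f with
  | forall y : @sigT ?B ?C, _ => constr:(fun y : @sigT B C => g (projT1 y) (projT2 y))
  | forall y : unit, _ => constr:(fun y : unit => g)
  | forall x : ?A, _ => constr:(fun x : A => ltac:(let r := uncurried (f x) (g x) in exact r))
  end.

Ltac funext_destruct :=
  repeat (apply functional_extensionality_dep; intro); cbn beta iota;
  repeat match goal with
         | y : @sigT _ _ |- _ => destruct y
         | y : unit |- _ => destruct y
         | |- ?t = tt => destruct t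
         | |- context [projT1 ?t] => lazymatch t with existT _ _ _ => fail | _ => destruct t end
         end; reflexivity.

(* Sigma types and unit have no definitional eta, so maps agreeing up to such eta are not
   convertible.  [eta_var f] replaces the variable [f] by an eta-long form: sigma arguments
   are curried, unit arguments dropped, and sigma- or unit-valued functions split into
   their components. *)
Ltac eta_var f :=
  let T := type of f in let T' := eval cbn in T in change T' in f;
  lazymatch T' with
  | @sigT _ _ =>
      let a := fresh "u" in let b := fresh "v" in
      revert f; refine (sigT_rect _ _); intros a b; cbn beta in b |- *; revert b; eta_var a;
      let b' := fresh "v" in intro b'; eta_var b'
  | unit => destruct f
  | _ =>
    first
    [ let t := curried f in
      let g := fresh "g" in pose (g := t);
      let e := uncurried f g in
      assert (f = e) by (unfold g; funext_destruct);
      clearbody g; subst f; cbn beta in *; eta_var g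
    | let e := under_binders f ltac:(fun t => lazymatch type of t with unit => constr:(tt) end) in
      assert (f = e) by funext_destruct; subst f; cbn beta in *
    | let t1 := under_binders f ltac:(fun t => constr:(projT1 t)) in
      let g := fresh "g" in pose (g := t1);
      let t2 := under_binders2 f g ltac:(fun t s =>
                  lazymatch type of (projT2 t) with ?P _ => constr:(projT2 t : P s) end) in
      let h := fresh "h" in pose (h := t2);
      let e := under_binders2 g h ltac:(fun s u =>
                  lazymatch type of u with ?P _ => constr:(existT P s u) end) in
      assert (f = e) by (unfold g, h; funext_destruct);
      clearbody g h; subst f; cbn beta in *; revert h; eta_var g;
      let h' := fresh "h" in intro h'; eta_var h'
    | idtac ]
  end.

Lemma pcompA {p q r t : poly} (f : pmap r t) (g : pmap q r) (h : pmap p q) :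
  f ∘ (g ∘ h) = f ∘ g ∘ h.
Proof. reflexivity. Qed.

Ltac strip_common_ends :=
  repeat lazymatch goal with |- pcomp ?A ?m = pcomp ?B ?m => apply (f_equal (fun X => X ∘ m)) end;
  repeat rewrite <- pcompA;
  repeat lazymatch goal with |- pcomp ?m ?A = pcomp ?m ?B => apply (f_equal (pcomp m)) end;
  repeat rewrite pcompA.

Tactic Notation "transparently" tactic3(t) :=
  with_strategy transparent
    [tri pcomp tri_map assoc assoc_inv lunit runit lunit_inv runit_inv pid] t.

Ltac coherence_core :=
  lazy beta iota zeta delta -[tri pcomp tri_map assoc assoc_inv lunit runit lunit_inv runit_inv pid
                              cp ceps cdel pos dir mpos mdir projT1 projT2];
  repeat match goal with
         | |- context [ceps ?D] => generalize (ceps D); intro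
         | |- context [cdel ?D] => generalize (cdel D); intro
         end;
  repeat match goal with
         | |- context [?f] => is_var f; lazymatch type of f with pmap _ _ =>
             let m := fresh "m" in let d := fresh "d" in
             destruct f as [m d]; revert d; eta_var m; intro d; eta_var d end
         end;
  apply pmap_ext; let x := fresh "x" in intro x; eta_var x;
  lazy beta delta iota; refine (f_equal (existT _ _) _);
  apply functional_extensionality; let e := fresh "e" in intro e; eta_var e;
  lazy beta delta iota; reflexivity.

(* Proves an equation between composites of structure maps and variable maps by comparing
   both sides pointwise after eta-expanding everything.  Equal outer factors are cancelled
   first: this strengthens the goal, but keeps the normal forms small. *)
Ltac coherence := strip_common_ends; transparently coherence_core.

Tactic Notation "coherence_to" constr(X) := transitivity X; [coherence |].

(** * The monoidal structure of Poly *)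

Lemma pcomp_idl {p q : poly} (f : pmap p q) : pid q ∘ f = f.
Proof. destruct f; reflexivity. Qed.
Lemma pcomp_idr {p q : poly} (f : pmap p q) : f ∘ pid p = f.
Proof. destruct f; reflexivity. Qed.
Lemma tri_map_comp {p p' p'' q q' q'' : poly} (f : pmap p' p'') (g : pmap q' q'')
  (f' : pmap p p') (g' : pmap q q') : (f ⊲ g) ∘ (f' ⊲ g') = (f ∘ f') ⊲ (g ∘ g').
Proof. reflexivity. Qed.
Lemma tri_map_id (p q : poly) : pid p ⊲ pid q = pid (p ◁ q).
Proof. coherence. Qed.
Lemma tri_map_comp_l {p p' p'' r : poly} (f : pmap p' p'') (g : pmap p p') :
  (f ∘ g) ⊲ pid r = (f ⊲ pid r) ∘ (g ⊲ pid r).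
Proof. reflexivity. Qed.
Lemma tri_map_comp_r {p p' p'' r : poly} (f : pmap p' p'') (g : pmap p p') :
  pid r ⊲ (f ∘ g) = (pid r ⊲ f) ∘ (pid r ⊲ g).
Proof. reflexivity. Qed.
Lemma tri_map_split_l {p p' p'' q q' : poly} (f : pmap p' p'') (g : pmap p p') (h : pmap q q') :
  (f ∘ g) ⊲ h = (f ⊲ h) ∘ (g ⊲ pid q).
Proof. rewrite tri_map_comp, pcomp_idr. reflexivity. Qed.
Lemma tri_map_split_r {p p' q q' q'' : poly} (f : pmap p p') (g : pmap q' q'') (h : pmap q q') :
  f ⊲ (g ∘ h) = (f ⊲ g) ∘ (pid p ⊲ h).
Proof. rewrite tri_map_comp, pcomp_idr. reflexivity. Qed.
Lemma tri_map_interchange {p p' q q' : poly} (f : pmap p p') (g : pmap q q') :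
  (pid p' ⊲ g) ∘ (f ⊲ pid q) = (f ⊲ pid q') ∘ (pid p ⊲ g).
Proof. rewrite !tri_map_comp, !pcomp_idl, !pcomp_idr. reflexivity. Qed.
Lemma assoc_nat {p p' q q' r r' : poly} (f : pmap p p') (g : pmap q q') (h : pmap r r') :
  assoc p' q' r' ∘ ((f ⊲ g) ⊲ h) = (f ⊲ (g ⊲ h)) ∘ assoc p q r.
Proof. reflexivity. Qed.
Lemma assoc_nat_l {p p' q r : poly} (f : pmap p p') :
  assoc p' q r ∘ ((f ⊲ pid q) ⊲ pid r) = (f ⊲ pid (q ◁ r)) ∘ assoc p q r.
Proof. rewrite assoc_nat, tri_map_id. reflexivity. Qed.
Lemma assoc_nat_m {p q q' r : poly} (g : pmap q q') :
  assoc p q' r ∘ ((pid p ⊲ g) ⊲ pid r) = (pid p ⊲ (g ⊲ pid r)) ∘ assoc p q r.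
Proof. apply assoc_nat. Qed.
Lemma assoc_nat_r {p q r r' : poly} (h : pmap r r') :
  assoc p q r' ∘ (pid (p ◁ q) ⊲ h) = (pid p ⊲ (pid q ⊲ h)) ∘ assoc p q r.
Proof. rewrite <- assoc_nat, tri_map_id. reflexivity. Qed.
Lemma assoc_inv_nat {p p' q q' r r' : poly} (f : pmap p p') (g : pmap q q') (h : pmap r r') :
  assoc_inv p' q' r' ∘ (f ⊲ (g ⊲ h)) = ((f ⊲ g) ⊲ h) ∘ assoc_inv p q r.
Proof. reflexivity. Qed.
Lemma assoc_inv_nat_l {p p' q r : poly} (f : pmap p p') :
  assoc_inv p' q r ∘ (f ⊲ pid (q ◁ r)) = ((f ⊲ pid q) ⊲ pid r) ∘ assoc_inv p q r.
Proof. rewrite <- assoc_inv_nat, tri_map_id. reflexivity. Qed.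
Lemma assoc_inv_nat_m {p q q' r : poly} (g : pmap q q') :
  assoc_inv p q' r ∘ (pid p ⊲ (g ⊲ pid r)) = ((pid p ⊲ g) ⊲ pid r) ∘ assoc_inv p q r.
Proof. apply assoc_inv_nat. Qed.
Lemma assoc_inv_nat_r {p q r r' : poly} (h : pmap r r') :
  assoc_inv p q r' ∘ (pid p ⊲ (pid q ⊲ h)) = (pid (p ◁ q) ⊲ h) ∘ assoc_inv p q r.
Proof. rewrite assoc_inv_nat, tri_map_id. reflexivity. Qed.
Lemma assocK (p q r : poly) : assoc p q r ∘ assoc_inv p q r = pid (p ◁ (q ◁ r)).
Proof. coherence. Qed.
Lemma assoc_invK (p q r : poly) : assoc_inv p q r ∘ assoc p q r = pid ((p ◁ q) ◁ r).
Proof. coherence. Qed.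
Lemma pentagon (p q r s : poly) :
  assoc p q (r ◁ s) ∘ assoc (p ◁ q) r s
  = (pid p ⊲ assoc q r s) ∘ assoc p (q ◁ r) s ∘ (assoc p q r ⊲ pid s).
Proof. coherence. Qed.
Lemma pentagon_assoc (p q r s : poly) :
  assoc p (q ◁ r) s ∘ (assoc p q r ⊲ pid s)
  = (pid p ⊲ assoc_inv q r s) ∘ assoc p q (r ◁ s) ∘ assoc (p ◁ q) r s.
Proof. coherence. Qed.
Lemma pentagon_assoc_inv (p q r s : poly) :
  (assoc_inv p q r ⊲ pid s) ∘ assoc_inv p (q ◁ r) s
  = assoc_inv (p ◁ q) r s ∘ assoc_inv p q (r ◁ s) ∘ (pid p ⊲ assoc q r s).
Proof. coherence. Qed.
Lemma pentagon_assoc_mixed (p q r s : poly) :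
  (assoc p q r ⊲ pid s) ∘ assoc_inv (p ◁ q) r s
  = assoc_inv p (q ◁ r) s ∘ (pid p ⊲ assoc_inv q r s) ∘ assoc p q (r ◁ s).
Proof. coherence. Qed.
Lemma lunit_nat {p q : poly} (f : pmap p q) : lunit q ∘ (pid ypoly ⊲ f) = f ∘ lunit p.
Proof. reflexivity. Qed.
Lemma runit_nat {p q : poly} (f : pmap p q) : runit q ∘ (f ⊲ pid ypoly) = f ∘ runit p.
Proof. reflexivity. Qed.
Lemma lunitK (p : poly) : lunit p ∘ lunit_inv p = pid p.
Proof. coherence. Qed.
Lemma lunit_invK (p : poly) : lunit_inv p ∘ lunit p = pid (ypoly ◁ p).
Proof. coherence. Qed.
Lemma lunit_inv_nat {p q : poly} (f : pmap p q) : lunit_inv q ∘ f = (pid ypoly ⊲ f) ∘ lunit_inv p.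
Proof. coherence. Qed.
Lemma lunit_assoc_inv (p q : poly) : (lunit p ⊲ pid q) ∘ assoc_inv ypoly p q = lunit (p ◁ q).
Proof. coherence. Qed.
Lemma lunit_assoc (p q : poly) : lunit (p ◁ q) ∘ assoc ypoly p q = lunit p ⊲ pid q.
Proof. coherence. Qed.
Lemma runitK (p : poly) : runit p ∘ runit_inv p = pid p.
Proof. coherence. Qed.
Lemma runit_invK (p : poly) : runit_inv p ∘ runit p = pid (p ◁ ypoly).
Proof. coherence. Qed.
Lemma runit_assoc (p q : poly) : (pid p ⊲ runit q) ∘ assoc p q ypoly = runit (p ◁ q).
Proof. coherence. Qed.

(* All later reasoning is by rewriting.  Keeping the structure maps opaque stops unification
   from unfolding them; [coherence] and [transparently] reopen them locally. *)
Opaque tri pcomp tri_map assoc assoc_inv lunit runit lunit_inv runit_inv pid.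

Ltac chain_prefix T L :=
  lazymatch L with
  | pcomp ?A _ => lazymatch T with pcomp ?T1 _ => chain_prefix T1 A end
  | _ => lazymatch T with pcomp ?W _ => constr:(W) end
  end.

(* Closed factors are compared syntactically: a failing unification may unfold them at great
   cost. *)
Ltac match_factor x y := tryif has_evar y then unify x y else constr_eq x y.

Ltac match_chain T L :=
  lazymatch L with
  | pcomp ?A ?B => lazymatch T with pcomp ?T1 ?T2 => match_factor T2 B; match_chain T1 A end
  | _ => lazymatch T with pcomp _ ?T2 => match_factor T2 L end
  end.

Ltac specialize_evars H :=
  lazymatch type of H with
  | forall _ : _, _ =>
      let H' := fresh "H" in epose proof (H _) as H'; clear H; rename H' into H; specialize_evars H
  | _ => idtac
  end.

(* [rewrite_chain e] rewrites with an equation [e] between composites modulo associativity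
   of [∘]: composites are kept left-associated, and the left-hand side of [e] may occur
   after an arbitrary prefix. *)
Ltac rewrite_chain_hyp H :=
  lazymatch type of H with
  | ?L = ?R =>
      first
      [ rewrite H
      | match goal with |- context [?T] =>
          match_chain T L;
          let W := chain_prefix T L in
          let E := fresh "E" in
          assert (E : T = pcomp W R) by (rewrite <- H; repeat rewrite pcompA; reflexivity);
          rewrite E; clear E
        end ];
      repeat rewrite pcompA
  end.

Tactic Notation "rewrite_chain" open_constr(t) :=
  let H := fresh "H" in epose proof t as H; specialize_evars H; rewrite_chain_hyp H; clear H.
Tactic Notation "rewrite_chain" "<-" open_constr(t) :=
  let H := fresh "H" in epose proof t as H; specialize_evars H; apply eq_sym in H;
  rewrite_chain_hyp H; clear H.

Ltac assoc_norm := repeat rewrite pcompA.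
Tactic Notation "assoc_norm" "in" hyp(H) := repeat rewrite pcompA in H.

(** * The bicomodule of a handler *)

Lemma F_lamE (C D : comonoid) (s : poly) (phi : pmap (s ◁ cp D) (cp C ◁ s)) :
  F_lam C D s phi = assoc (cp C) s (cp D) ∘ (phi ⊲ pid (cp D)) ∘ F_rho D s.
Proof. symmetry; apply pcompA. Qed.

Lemma F_rho_counit (D : comonoid) (s : poly) : IsComonoid D ->
  runit (s ◁ cp D) ∘ (pid (s ◁ cp D) ⊲ ceps D) ∘ F_rho D s = pid (s ◁ cp D).
Proof.
  intros [counit_r _].
  coherence_to (pid s ⊲ (runit (cp D) ∘ (pid (cp D) ⊲ ceps D) ∘ cdel D)).
  rewrite counit_r. apply tri_map_id.
Qed.

Lemma F_rho_coassoc (D : comonoid) (s : poly) : IsComonoid D ->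
  assoc (s ◁ cp D) (cp D) (cp D) ∘ (F_rho D s ⊲ pid (cp D)) ∘ F_rho D s
  = (pid (s ◁ cp D) ⊲ cdel D) ∘ F_rho D s.
Proof.
  intros [_ [_ coassoc]].
  coherence_to (assoc_inv s (cp D) (cp D ◁ cp D)
                  ∘ (pid s ⊲ (assoc (cp D) (cp D) (cp D) ∘ (cdel D ⊲ pid (cp D)) ∘ cdel D))).
  rewrite coassoc. coherence.
Qed.

Lemma F_lam_rho_commute (C D : comonoid) (s : poly) (phi : pmap (s ◁ cp D) (cp C ◁ s)) :
  IsComonoid D ->
  assoc (cp C) (s ◁ cp D) (cp D) ∘ (F_lam C D s phi ⊲ pid (cp D)) ∘ F_rho D s
  = (pid (cp C) ⊲ F_rho D s) ∘ F_lam C D s phi.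
Proof.
  intro HD. rewrite !F_lamE, !tri_map_comp_l. assoc_norm.
  rewrite_chain pentagon_assoc.
  rewrite_chain assoc_nat_l.
  rewrite_chain (F_rho_coassoc D s HD).
  rewrite_chain <- tri_map_interchange.
  rewrite_chain assoc_nat_r.
  rewrite_chain <- tri_map_comp_r.
  reflexivity.
Qed.

Lemma handler_coassoc (C D : comonoid) (s : poly) (phi : pmap (s ◁ cp D) (cp C ◁ s)) :
  IsHandler C D s phi ->
  assoc (cp C) (cp C) s ∘ (cdel C ⊲ pid s) ∘ phi = (pid (cp C) ⊲ phi) ∘ F_lam C D s phi.
Proof. intros [_ H]. rewrite H. unfold F_lam. assoc_norm. reflexivity. Qed.

Lemma F_lam_counit (C D : comonoid) (s : poly) (phi : pmap (s ◁ cp D) (cp C ◁ s)) :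
  IsComonoid D -> IsHandler C D s phi ->
  lunit (s ◁ cp D) ∘ (ceps C ⊲ pid (s ◁ cp D)) ∘ F_lam C D s phi = pid (s ◁ cp D).
Proof.
  intros [_ [counit_l _]] [phi_counit _]. rewrite F_lamE. assoc_norm.
  coherence_to (((lunit s ∘ (ceps C ⊲ pid s)) ⊲ pid (cp D)) ∘ (phi ⊲ pid (cp D)) ∘ F_rho D s).
  rewrite <- tri_map_comp_l, phi_counit.
  coherence_to (pid s ⊲ (lunit (cp D) ∘ (ceps D ⊲ pid (cp D)) ∘ cdel D)).
  rewrite counit_l. apply tri_map_id.
Qed.

Lemma F_lam_coassoc (C D : comonoid) (s : poly) (phi : pmap (s ◁ cp D) (cp C ◁ s)) :
  IsComonoid D -> IsHandler C D s phi ->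
  assoc (cp C) (cp C) (s ◁ cp D) ∘ (cdel C ⊲ pid (s ◁ cp D)) ∘ F_lam C D s phi
  = (pid (cp C) ⊲ F_lam C D s phi) ∘ F_lam C D s phi.
Proof.
  intros HD Hphi. rewrite !F_lamE. assoc_norm.
  (* The handler law reduces this to the compatibility [F_lam_rho_commute]. *)
  coherence_to ((pid (cp C) ⊲ assoc (cp C) s (cp D)) ∘ assoc (cp C) (cp C ◁ s) (cp D)
                  ∘ ((assoc (cp C) (cp C) s ∘ (cdel C ⊲ pid s)) ⊲ pid (cp D)) ∘ (phi ⊲ pid (cp D))
                  ∘ F_rho D s).
  rewrite_chain <- (tri_map_comp_l (r := cp D) (assoc (cp C) (cp C) s ∘ (cdel C ⊲ pid s)) phi).
  rewrite (handler_coassoc C D s phi Hphi), tri_map_comp_l. assoc_norm.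
  rewrite_chain (assoc_nat_m (p := cp C) phi).
  rewrite_chain (F_lam_rho_commute C D s phi HD).
  rewrite F_lamE. rewrite !tri_map_comp_r. assoc_norm. reflexivity.
Qed.

Lemma F_bicomodule (C D : comonoid) (s : poly) (phi : pmap (s ◁ cp D) (cp C ◁ s)) :
  IsComonoid D -> IsHandler C D s phi ->
  IsBicomodule C D (s ◁ cp D) (F_lam C D s phi) (F_rho D s).
Proof.
  intros HD Hphi.
  repeat split;
    auto using F_lam_counit, F_lam_coassoc, F_rho_counit, F_rho_coassoc, F_lam_rho_commute.
Qed.

Lemma F_rho_square (D D' : comonoid) (s s' : poly) (gamma : pmap s s')
  (beta : pmap (cp D) (cp D')) :
  IsCofunctor D D' beta ->
  ((gamma ⊲ beta) ⊲ beta) ∘ F_rho D s = F_rho D' s' ∘ (gamma ⊲ beta).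
Proof.
  intros [_ beta_cdel]. unfold F_rho. assoc_norm.
  rewrite_chain (tri_map_comp (pid s') (cdel D')). rewrite pcomp_idl, beta_cdel.
  rewrite tri_map_split_r. assoc_norm.
  rewrite_chain <- assoc_inv_nat. reflexivity.
Qed.

Lemma F_square (C C' D D' : comonoid)
  (s : poly) (phi : pmap (s ◁ cp D) (cp C ◁ s)) (s' : poly) (phi' : pmap (s' ◁ cp D') (cp C' ◁ s'))
  (alpha : pmap (cp C) (cp C')) (beta : pmap (cp D) (cp D')) (gamma : pmap s s') :
  IsCofunctor D D' beta -> IsEffSquare C C' D D' s phi s' phi' alpha beta gamma ->
  IsBicomodSquare C C' D D' (s ◁ cp D) (F_lam C D s phi) (F_rho D s)
    (s' ◁ cp D') (F_lam C' D' s' phi') (F_rho D' s') alpha beta (F_sq D D' gamma beta).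
Proof.
  intros Hbeta Hsq. unfold F_sq. split; [|exact (F_rho_square D D' s s' gamma beta Hbeta)].
  rewrite !F_lamE. assoc_norm.
  rewrite_chain <- (F_rho_square D D' s s' gamma beta Hbeta).
  rewrite_chain (tri_map_comp phi' _ (gamma ⊲ beta)). rewrite pcomp_idl, <- Hsq.
  rewrite tri_map_split_l. assoc_norm.
  rewrite_chain assoc_nat. reflexivity.
Qed.

(** * Cotensor products with a cofree comodule *)

(* For a left [d]-coaction [lam] on [q], [s ◁ q] is the cotensor product of the cofree right
   comodule [s ◁ d] with [q]; this is its inclusion into [(s ◁ d) ◁ q]. *)
Definition cotensor_incl (s : poly) {d q : poly} (lam : pmap q (d ◁ q))
  : pmap (s ◁ q) ((s ◁ d) ◁ q) :=
  assoc_inv s d q ∘ (pid s ⊲ lam).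

Section Cotensor.

Variables (s : poly) (D : comonoid) (q : poly) (lam : pmap q (cp D ◁ q)).

Lemma cotensor_incl_equalizes :
  assoc (cp D) (cp D) q ∘ (cdel D ⊲ pid q) ∘ lam = (pid (cp D) ⊲ lam) ∘ lam ->
  Equalizes D (F_rho D s) lam (cotensor_incl s lam).
Proof.
  intro lam_coassoc. unfold Equalizes, F_rho, cotensor_incl. assoc_norm.
  coherence_to (assoc_inv (s ◁ cp D) (cp D) q ∘ assoc_inv s (cp D) (cp D ◁ q)
                  ∘ (pid s ⊲ (assoc (cp D) (cp D) q ∘ (cdel D ⊲ pid q))) ∘ (pid s ⊲ lam)).
  rewrite_chain <- tri_map_comp_r. rewrite lam_coassoc, tri_map_comp_r. assoc_norm.
  coherence.
Qed.

Lemma cotensor_incl_universal :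
  IsComonoid D -> lunit q ∘ (ceps D ⊲ pid q) ∘ lam = pid q ->
  forall (x : poly) (h : pmap x ((s ◁ cp D) ◁ q)),
    Equalizes D (F_rho D s) lam h -> exists! h' : pmap x (s ◁ q), cotensor_incl s lam ∘ h' = h.
Proof.
  intros [_ [counit_l _]] lam_counit x h Hh.
  (* [r] and [m] are the counit retractions of [cotensor_incl s lam] and [F_rho D s]; an
     equalizing [h] factors as [cotensor_incl s lam ∘ (r ∘ h)] because [(m ⊲ q) ∘ (F_rho ⊲ q)]
     is the identity. *)
  set (r := (pid s ⊲ (lunit q ∘ (ceps D ⊲ pid q))) ∘ assoc s (cp D) q).
  set (m := (pid s ⊲ (lunit (cp D) ∘ (ceps D ⊲ pid (cp D)))) ∘ assoc s (cp D) (cp D)).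
  assert (r_incl : r ∘ cotensor_incl s lam = pid (s ◁ q)).
  { unfold r. coherence_to (pid s ⊲ (lunit q ∘ (ceps D ⊲ pid q) ∘ lam)).
    rewrite lam_counit. apply tri_map_id. }
  assert (m_rho : m ∘ F_rho D s = pid (s ◁ cp D)).
  { unfold m. coherence_to (pid s ⊲ (lunit (cp D) ∘ (ceps D ⊲ pid (cp D)) ∘ cdel D)).
    rewrite counit_l. apply tri_map_id. }
  assert (m_incl : (m ⊲ pid q) ∘ assoc_inv (s ◁ cp D) (cp D) q ∘ (pid (s ◁ cp D) ⊲ lam)
                   = cotensor_incl s lam ∘ r).
  { unfold m, r. coherence. }
  exists (r ∘ h). split.
  - transitivity (((m ∘ F_rho D s) ⊲ pid q) ∘ h).
    + rewrite tri_map_comp_l, <- pcompA, Hh. assoc_norm. rewrite m_incl. reflexivity.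
    + rewrite m_rho, tri_map_id. apply pcomp_idl.
  - intros h' <-. rewrite pcompA, r_incl. apply pcomp_idl.
Qed.
End Cotensor.

(** * The compositor *)

(* F(s) ◁_D F(t) = (s ◁ D) ◁_D (t ◁ E) ≅ s ◁ (t ◁ E) ≅ (s ◁ t) ◁ E = F(s ◁ t). *)
Definition F_compositor (D E : comonoid) (s t : poly) (psi : pmap (t ◁ cp E) (cp D ◁ t))
  : pmap ((s ◁ t) ◁ cp E) ((s ◁ cp D) ◁ (t ◁ cp E)) :=
  cotensor_incl s (F_lam D E t psi) ∘ assoc s t (cp E).

Lemma F_compositor_equalizes (D E : comonoid) (s t : poly) (psi : pmap (t ◁ cp E) (cp D ◁ t)) :
  IsComonoid E -> IsHandler D E t psi ->
  Equalizes D (F_rho D s) (F_lam D E t psi) (F_compositor D E s t psi).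
Proof.
  intros HE Hpsi.
  pose proof (cotensor_incl_equalizes s D _ _ (F_lam_coassoc D E t psi HE Hpsi)) as H.
  unfold Equalizes, F_compositor in *. assoc_norm. rewrite H. reflexivity.
Qed.

Lemma F_compositor_universal (D E : comonoid) (s t : poly) (psi : pmap (t ◁ cp E) (cp D ◁ t)) :
  IsComonoid D -> IsComonoid E -> IsHandler D E t psi ->
  forall (x : poly) (h : pmap x ((s ◁ cp D) ◁ (t ◁ cp E))),
    Equalizes D (F_rho D s) (F_lam D E t psi) h ->
    exists! h' : pmap x ((s ◁ t) ◁ cp E), F_compositor D E s t psi ∘ h' = h.
Proof.
  intros HD HE Hpsi x h Hh.
  destruct (cotensor_incl_universal s D _ _ HD (F_lam_counit D E t psi HE Hpsi) x h Hh)
    as [h0 [incl_h0 h0_unique]].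
  exists (assoc_inv s t (cp E) ∘ h0). split.
  - unfold F_compositor. assoc_norm. rewrite_chain assocK. rewrite pcomp_idr. exact incl_h0.
  - intros h' Hh'.
    assert (E0 : h0 = assoc s t (cp E) ∘ h') by (apply h0_unique; rewrite <- Hh'; apply pcompA).
    rewrite E0, pcompA, assoc_invK. apply pcomp_idl.
Qed.

Lemma F_compositor_rho (D E : comonoid) (s t : poly) (psi : pmap (t ◁ cp E) (cp D ◁ t)) :
  IsComonoid E ->
  (F_compositor D E s t psi ⊲ pid (cp E)) ∘ F_rho E (s ◁ t)
  = assoc_inv (s ◁ cp D) (t ◁ cp E) (cp E) ∘ (pid (s ◁ cp D) ⊲ F_rho E t)
    ∘ F_compositor D E s t psi.
Proof.
  intro HE.
  pose proof (f_equal (tri_map (pid s)) (F_lam_rho_commute D E t psi HE)) as compat.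
  unfold F_compositor, cotensor_incl. set (lam := F_lam D E t psi) in *.
  unfold F_rho at 1 in compat. rewrite !tri_map_comp_r in compat. assoc_norm in compat.
  unfold F_rho at 1. rewrite !tri_map_comp_l. assoc_norm.
  rewrite_chain pentagon_assoc_mixed.
  rewrite_chain assoc_nat_r.
  rewrite_chain <- (assoc_inv_nat_m (p := s) (r := cp E) lam).
  rewrite_chain pentagon_assoc_inv.
  rewrite_chain compat.
  rewrite_chain assoc_inv_nat_r.
  reflexivity.
Qed.

Lemma F_lam_hcomp (C D E : comonoid) (s : poly) (phi : pmap (s ◁ cp D) (cp C ◁ s))
  (t : poly) (psi : pmap (t ◁ cp E) (cp D ◁ t)) :
  F_lam C E (s ◁ t) (hcomp_phi C D E s phi t psi)
  = (pid (cp C) ⊲ assoc_inv s t (cp E)) ∘ assoc (cp C) s (t ◁ cp E) ∘ (phi ⊲ pid (t ◁ cp E))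
    ∘ assoc_inv s (cp D) (t ◁ cp E) ∘ (pid s ⊲ F_lam D E t psi) ∘ assoc s t (cp E).
Proof.
  transitivity ((pid (cp C) ⊲ assoc_inv s t (cp E)) ∘ assoc (cp C) s (t ◁ cp E)
    ∘ (phi ⊲ pid (t ◁ cp E)) ∘ assoc_inv s (cp D) (t ◁ cp E) ∘ (pid s ⊲ assoc (cp D) t (cp E))
    ∘ (pid s ⊲ (psi ⊲ pid (cp E))) ∘ (pid s ⊲ assoc_inv t (cp E) (cp E))
    ∘ assoc s t (cp E ◁ cp E) ∘ (pid (s ◁ t) ⊲ cdel E)).
  - unfold F_lam, hcomp_phi. rewrite !tri_map_comp_l. assoc_norm.
    rewrite_chain pentagon_assoc_mixed.
    rewrite_chain <- (assoc_inv_nat_m (p := s) (r := cp E) psi).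
    rewrite_chain pentagon_assoc_inv.
    rewrite_chain <- (assoc_inv_nat_l (q := t) (r := cp E) phi).
    rewrite_chain pentagon_assoc.
    rewrite_chain assocK. rewrite pcomp_idr. reflexivity.
  - unfold F_lam. rewrite !tri_map_comp_r. assoc_norm.
    rewrite_chain <- (assoc_nat_r (p := s) (q := t) (cdel E)). reflexivity.
Qed.

Lemma F_compositor_lam (C D E : comonoid) (s : poly) (phi : pmap (s ◁ cp D) (cp C ◁ s))
  (t : poly) (psi : pmap (t ◁ cp E) (cp D ◁ t)) :
  IsComonoid E -> IsHandler D E t psi ->
  (pid (cp C) ⊲ F_compositor D E s t psi) ∘ F_lam C E (s ◁ t) (hcomp_phi C D E s phi t psi)
  = assoc (cp C) (s ◁ cp D) (t ◁ cp E) ∘ (F_lam C D s phi ⊲ pid (t ◁ cp E))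
    ∘ F_compositor D E s t psi.
Proof.
  intros HE Hpsi.
  pose proof (f_equal (tri_map (pid s)) (F_lam_coassoc D E t psi HE Hpsi)) as lam_coassoc.
  rewrite F_lam_hcomp. unfold F_compositor, cotensor_incl.
  set (lam := F_lam D E t psi) in *.
  rewrite !tri_map_comp_r in lam_coassoc. assoc_norm in lam_coassoc.
  transitivity ((pid (cp C) ⊲ assoc_inv s (cp D) (t ◁ cp E)) ∘ (pid (cp C) ⊲ (pid s ⊲ lam))
    ∘ assoc (cp C) s (t ◁ cp E) ∘ (phi ⊲ pid (t ◁ cp E)) ∘ assoc_inv s (cp D) (t ◁ cp E)
    ∘ (pid s ⊲ lam) ∘ assoc s t (cp E)).
  - assoc_norm.
    rewrite_chain <- (tri_map_comp_r (r := cp C)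
      (assoc_inv s (cp D) (t ◁ cp E) ∘ (pid s ⊲ lam) ∘ assoc s t (cp E)) (assoc_inv s t (cp E))).
    assoc_norm. rewrite_chain assocK. rewrite pcomp_idr, !tri_map_comp_r. assoc_norm. reflexivity.
  - symmetry. unfold F_lam. rewrite !tri_map_comp_l. assoc_norm.
    rewrite_chain <- (assoc_inv_nat_m (p := s) (r := t ◁ cp E) (cdel D)).
    rewrite_chain pentagon_assoc_inv.
    rewrite_chain lam_coassoc.
    rewrite_chain (assoc_inv_nat_r (p := s) (q := cp D) lam).
    rewrite_chain <- (assoc_inv_nat_l (q := cp D) (r := t ◁ cp E) phi).
    rewrite_chain <- tri_map_interchange.
    rewrite_chain pentagon_assoc.
    rewrite_chain assocK. rewrite pcomp_idr.
    rewrite_chain (assoc_nat_r (p := cp C) (q := s) lam). reflexivity.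
Qed.

Lemma F_hcomp (C D E : comonoid) (s : poly) (phi : pmap (s ◁ cp D) (cp C ◁ s))
  (t : poly) (psi : pmap (t ◁ cp E) (cp D ◁ t)) :
  IsComonoid D -> IsComonoid E -> IsHandler D E t psi ->
  IsHComposite C D E (s ◁ cp D) (F_lam C D s phi) (F_rho D s)
    (t ◁ cp E) (F_lam D E t psi) (F_rho E t)
    ((s ◁ t) ◁ cp E) (F_lam C E (s ◁ t) (hcomp_phi C D E s phi t psi)) (F_rho E (s ◁ t))
    (F_compositor D E s t psi).
Proof.
  intros HD HE Hpsi.
  split; [apply F_compositor_equalizes; assumption |].
  split; [apply F_compositor_universal; assumption |].
  split; [apply F_compositor_lam; assumption | apply F_compositor_rho; assumption].
Qed.

Lemma F_compositor_nat (D D' E E' : comonoid) (s s' t t' : poly)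
  (psi : pmap (t ◁ cp E) (cp D ◁ t)) (psi' : pmap (t' ◁ cp E') (cp D' ◁ t'))
  (beta : pmap (cp D) (cp D')) (kappa : pmap (cp E) (cp E'))
  (gamma : pmap s s') (gamma' : pmap t t') :
  IsCofunctor E E' kappa -> IsEffSquare D D' E E' t psi t' psi' beta kappa gamma' ->
  F_compositor D' E' s' t' psi' ∘ F_sq E E' (gamma ⊲ gamma') kappa
  = (F_sq D D' gamma beta ⊲ F_sq E E' gamma' kappa) ∘ F_compositor D E s t psi.
Proof.
  intros Hkappa Hsq.
  destruct (F_square D D' E E' t psi t' psi' beta kappa gamma' Hkappa Hsq) as [lam_square _].
  unfold F_sq in *. unfold F_compositor, cotensor_incl. assoc_norm.
  rewrite_chain (assoc_nat gamma gamma' kappa).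
  rewrite_chain (tri_map_comp (pid s') (F_lam D' E' t' psi') gamma (gamma' ⊲ kappa)).
  rewrite pcomp_idl, <- lam_square, tri_map_split_r. assoc_norm.
  rewrite_chain (assoc_inv_nat gamma beta (gamma' ⊲ kappa)). reflexivity.
Qed.

Lemma F_assoc_coherence (D E G : comonoid) (s t u : poly)
  (psi : pmap (t ◁ cp E) (cp D ◁ t)) (chi : pmap (u ◁ cp G) (cp E ◁ u)) :
  IsComonoid G -> IsHandler E G u chi ->
  (pid (s ◁ cp D) ⊲ F_compositor E G t u chi)
    ∘ F_compositor D G s (t ◁ u) (hcomp_phi D E G t psi u chi)
    ∘ F_sq G G (assoc s t u) (pid (cp G))
  = assoc (s ◁ cp D) (t ◁ cp E) (u ◁ cp G) ∘ (F_compositor D E s t psi ⊲ pid (u ◁ cp G))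
    ∘ F_compositor E G (s ◁ t) u chi.
Proof.
  intros HG Hchi.
  pose proof (f_equal (tri_map (pid s)) (F_compositor_lam D E G t psi u chi HG Hchi)) as compat.
  rewrite !tri_map_comp_r in compat. assoc_norm in compat.
  unfold F_sq. unfold F_compositor at 2 3. unfold cotensor_incl. assoc_norm.
  rewrite_chain <- (assoc_inv_nat_r (p := s) (q := cp D) (F_compositor E G t u chi)).
  rewrite_chain compat.
  unfold F_compositor, cotensor_incl.
  set (lt := F_lam D E t psi). set (lu := F_lam E G u chi).
  rewrite !tri_map_comp_r, !tri_map_comp_l. assoc_norm.
  rewrite_chain <- pentagon.
  rewrite_chain pentagon_assoc_mixed.
  rewrite_chain (assoc_nat_r (p := s) (q := t) lu).
  rewrite_chain <- (assoc_inv_nat_m (p := s) (r := u ◁ cp G) lt).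
  rewrite_chain pentagon_assoc_inv.
  rewrite_chain assocK. rewrite pcomp_idl. reflexivity.
Qed.

(** * The unitor *)

Lemma F_unitor_square (C : comonoid) :
  IsBicomodSquare C C C C (cp C) (cdel C) (cdel C)
    (ypoly ◁ cp C) (F_lam C C ypoly (hid_phi C)) (F_rho C ypoly)
    (pid (cp C)) (pid (cp C)) (lunit_inv (cp C)).
Proof. split; coherence. Qed.

Lemma F_lunit_coherence (C D : comonoid) (s : poly) (phi : pmap (s ◁ cp D) (cp C ◁ s)) :
  IsComonoid D -> IsHandler C D s phi ->
  F_sq D D (lunit s) (pid (cp D))
  = lunit (s ◁ cp D) ∘ (ceps C ⊲ pid (s ◁ cp D)) ∘ (lunit (cp C) ⊲ pid (s ◁ cp D))
    ∘ F_compositor C D ypoly s phi.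
Proof.
  intros HD Hphi. unfold F_sq, F_compositor, cotensor_incl. assoc_norm.
  rewrite_chain lunit_assoc_inv.
  rewrite_chain (lunit_nat (F_lam C D s phi)).
  rewrite (F_lam_counit C D s phi HD Hphi), pcomp_idl, lunit_assoc. reflexivity.
Qed.

Lemma F_runit_coherence (D : comonoid) (s : poly) :
  IsComonoid D ->
  F_sq D D (runit s) (pid (cp D))
  = runit (s ◁ cp D) ∘ (pid (s ◁ cp D) ⊲ ceps D) ∘ (pid (s ◁ cp D) ⊲ lunit (cp D))
    ∘ F_compositor D D s ypoly (hid_phi D).
Proof.
  intros [counit_r _]. unfold F_sq. symmetry.
  coherence_to ((pid s ⊲ (runit (cp D) ∘ (pid (cp D) ⊲ ceps D) ∘ cdel D)) ∘ (runit s ⊲ pid (cp D))).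
  rewrite counit_r, tri_map_id. apply pcomp_idl.
Qed.

(** * Faithfulness *)

(* The only place where a point of [d], i.e. [d ≠ 0], is needed. *)
Definition point_section (s : poly) {d : poly} (d0 : pos d) : pmap s (s ◁ d) :=
  {| mpos := fun i => existT (fun i => dir s i -> pos d) i (fun _ => d0);
     mdir := fun i e => projT1 e |}.

Lemma tri_map_point_section (s s' d d' : poly) (d0 : pos d) (eps : pmap d' ypoly)
  (g : pmap s s') (beta : pmap d d') :
  runit s' ∘ (pid s' ⊲ eps) ∘ (g ⊲ beta) ∘ point_section s d0 = g.
Proof. coherence. Qed.

Lemma tri_map_inj_l (s s' d d' : poly) (d0 : pos d) (eps : pmap d' ypoly)
  (beta : pmap d d') (g g' : pmap s s') :
  g ⊲ beta = g' ⊲ beta -> g = g'.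
Proof.
  intro E. rewrite <- (tri_map_point_section s s' d d' d0 eps g beta), E.
  apply tri_map_point_section.
Qed.

(** * The essential image over 0 and y *)

Lemma pmap_ext_nodir {p q : poly} (f g : pmap p q) :
  (forall j, dir q j -> False) -> (forall i, mpos f i = mpos g i) -> f = g.
Proof.
  intros q_nodir E. destruct f as [f1 f2], g as [g1 g2]; cbn in *.
  assert (f1 = g1) as <- by (apply functional_extensionality; exact E).
  f_equal. apply functional_extensionality_dep; intro i.
  apply functional_extensionality; intro e. destruct (q_nodir _ e).
Qed.

Lemma zero_comodule_nodir (p : poly) (rho : pmap p (p ◁ zpoly)) (eps : pmap zpoly ypoly) :
  runit p ∘ (pid p ⊲ eps) ∘ rho = pid p -> forall i, dir p i -> False.
Proof.
  intros rho_counit i a.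
  pose proof (f_equal (fun h => mpos h i) rho_counit) as rho_i. transparently cbn in rho_i.
  destruct (mpos rho i) as [j f]. cbn in rho_i. subst j. destruct (f a).
Qed.

Lemma tri_zpoly_pos_eq (p : poly) (x y : pos (p ◁ zpoly)) : projT1 x = projT1 y -> x = y.
Proof.
  destruct x as [i f], y as [j g]; cbn. intros <-. f_equal.
  apply functional_extensionality; intro a. destruct (f a).
Qed.

Section NoDirections.

Variables (p : poly) (p_nodir : forall i, dir p i -> False).

Definition nodir_proj : pmap (p ◁ zpoly) p :=
  {| mpos := fun x => projT1 x;
     mdir := fun x a => match projT2 x a return dir (p ◁ zpoly) x with end |}.

Definition nodir_incl : pmap p (p ◁ zpoly) :=
  {| mpos := fun i => existT (fun i => dir p i -> pos zpoly) i
                        (fun a => match p_nodir i a return pos zpoly with end);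
     mdir := fun i e => projT1 e |}.

Lemma tri_nodir_l (x : poly) : forall j, dir (p ◁ x) j -> False.
Proof. intros j e. exact (p_nodir _ (projT1 e)). Qed.

Lemma tri_nodir_r (x : poly) : forall j, dir (x ◁ p) j -> False.
Proof. intros j e. exact (p_nodir _ (projT2 e)). Qed.

Lemma nodir_proj_incl : nodir_proj ∘ nodir_incl = pid p.
Proof. apply pmap_ext_nodir; [exact p_nodir | reflexivity]. Qed.

Lemma nodir_incl_proj : nodir_incl ∘ nodir_proj = pid (p ◁ zpoly).
Proof.
  apply pmap_ext_nodir; [apply tri_nodir_l |].
  intro x. apply tri_zpoly_pos_eq. reflexivity.
Qed.

End NoDirections.

Lemma zero_bicomodule_essential_image (C : comonoid) (p : poly) (lam : pmap p (cp C ◁ p))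
  (rho : pmap p (p ◁ cp zero_comonoid)) :
  IsBicomodule C zero_comonoid p lam rho ->
  exists (s : poly) (phi : pmap (s ◁ cp zero_comonoid) (cp C ◁ s)),
    IsHandler C zero_comonoid s phi /\
    exists (g : pmap (s ◁ cp zero_comonoid) p) (g_inv : pmap p (s ◁ cp zero_comonoid)),
      g ∘ g_inv = pid p /\ g_inv ∘ g = pid (s ◁ cp zero_comonoid) /\
      IsBicomodSquare C C zero_comonoid zero_comonoid
        (s ◁ cp zero_comonoid) (F_lam C zero_comonoid s phi) (F_rho zero_comonoid s) p lam rho
        (pid (cp C)) (pid (cp zero_comonoid)) g.
Proof.
  intros [lam_counit [lam_coassoc [rho_counit _]]].
  pose proof (zero_comodule_nodir p rho _ rho_counit) as p_nodir.
  exists p, (lam ∘ nodir_proj p). split; [split |].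
  - apply pmap_ext_nodir; [exact p_nodir |]. intros [i f].
    exact (f_equal (fun h => mpos h i) lam_counit).
  - apply pmap_ext_nodir; [exact (tri_nodir_r _ (tri_nodir_r p p_nodir (cp C)) (cp C)) |].
    intros [i f].
    exact (f_equal (fun h => mpos h i) lam_coassoc).
  - exists (nodir_proj p), (nodir_incl p p_nodir).
    split; [apply nodir_proj_incl | split; [apply nodir_incl_proj | split]].
    + apply pmap_ext_nodir; [exact (tri_nodir_r p p_nodir (cp C)) |]. intros [i f].
      transparently cbn. destruct (mpos lam i); reflexivity.
    + apply pmap_ext_nodir; [exact (tri_nodir_l p p_nodir zpoly) |]. intros [i f].
      pose proof (f_equal (fun h => mpos h i) rho_counit) as rho_i. transparently cbn in rho_i.
      apply tri_zpoly_pos_eq. transparently cbn. symmetry. exact rho_i.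
Qed.

Lemma F_rho_y_counit (p : poly) : runit (p ◁ ypoly) ∘ F_rho y_comonoid p = pid (p ◁ ypoly).
Proof. coherence. Qed.
Lemma F_rho_y (p : poly) : (runit p ⊲ pid ypoly) ∘ F_rho y_comonoid p = runit_inv p ∘ runit p.
Proof. coherence. Qed.
Lemma F_lam_y (C : comonoid) (p : poly) (phi : pmap (p ◁ ypoly) (cp C ◁ p)) :
  (pid (cp C) ⊲ runit p) ∘ F_lam C y_comonoid p phi = phi.
Proof.
  rewrite F_lamE. assoc_norm.
  rewrite_chain runit_assoc. rewrite_chain runit_nat.
  change (cp y_comonoid) with ypoly. rewrite_chain F_rho_y_counit. apply pcomp_idr.
Qed.

Lemma y_bicomodule_essential_image (C : comonoid) (p : poly) (lam : pmap p (cp C ◁ p))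
  (rho : pmap p (p ◁ cp y_comonoid)) :
  IsBicomodule C y_comonoid p lam rho ->
  exists (s : poly) (phi : pmap (s ◁ cp y_comonoid) (cp C ◁ s)),
    IsHandler C y_comonoid s phi /\
    exists (g : pmap (s ◁ cp y_comonoid) p) (g_inv : pmap p (s ◁ cp y_comonoid)),
      g ∘ g_inv = pid p /\ g_inv ∘ g = pid (s ◁ cp y_comonoid) /\
      IsBicomodSquare C C y_comonoid y_comonoid
        (s ◁ cp y_comonoid) (F_lam C y_comonoid s phi) (F_rho y_comonoid s) p lam rho
        (pid (cp C)) (pid (cp y_comonoid)) g.
Proof.
  intros [lam_counit [lam_coassoc [rho_counit _]]].
  change (cp y_comonoid) with ypoly in *.
  assert (rho_runit : rho = runit_inv p).
  { change (ceps y_comonoid) with (pid ypoly) in rho_counit.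
    rewrite tri_map_id, pcomp_idr in rho_counit.
    transitivity (runit_inv p ∘ (runit p ∘ rho)).
    - rewrite pcompA, runit_invK. symmetry. apply pcomp_idl.
    - rewrite rho_counit. apply pcomp_idr. }
  exists p, (lam ∘ runit p). split; [split |].
  - rewrite pcompA, lam_counit, pcomp_idl. change (ceps y_comonoid) with (pid ypoly).
    rewrite tri_map_id. symmetry. apply pcomp_idr.
  - assert (H : assoc (cp C) (cp C) p ∘ (cdel C ⊲ pid p) ∘ (lam ∘ runit p)
                = (pid (cp C) ⊲ (lam ∘ runit p)) ∘ F_lam C y_comonoid p (lam ∘ runit p)).
    { rewrite !pcompA, lam_coassoc, tri_map_comp_r. rewrite_chain F_lam_y. reflexivity. }
    unfold F_lam in H. assoc_norm in H. exact H.
  - exists (runit p), (runit_inv p).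
    split; [apply runitK | split; [apply runit_invK | split]].
    + apply F_lam_y.
    + rewrite rho_runit. apply F_rho_y.
Qed.

Theorem mainTheorem8 :
  (** (1) a pseudo-double functor F : Eff -> Cat#, identity on objects and
      vertical morphisms, with the prescribed action on handlers and squares *)
  ( (* F(s,phi) is a (C,D)-bicomodule *)
    (forall (C D : comonoid) (s : poly) (phi : pmap (s ◁ cp D) (cp C ◁ s)),
       IsComonoid C -> IsComonoid D -> IsHandler C D s phi ->
       IsBicomodule C D (s ◁ cp D) (F_lam C D s phi) (F_rho D s))
    (* F(gamma) = gamma ◁ beta is a square of Cat# *)
 /\ (forall (C C' D D' : comonoid)
       (s : poly) (phi : pmap (s ◁ cp D) (cp C ◁ s))
       (s' : poly) (phi' : pmap (s' ◁ cp D') (cp C' ◁ s'))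
       (alpha : pmap (cp C) (cp C')) (beta : pmap (cp D) (cp D')) (gamma : pmap s s'),
       IsComonoid C -> IsComonoid C' -> IsComonoid D -> IsComonoid D' ->
       IsHandler C D s phi -> IsHandler C' D' s' phi' ->
       IsCofunctor C C' alpha -> IsCofunctor D D' beta ->
       IsEffSquare C C' D D' s phi s' phi' alpha beta gamma ->
       IsBicomodSquare C C' D D'
         (s ◁ cp D) (F_lam C D s phi) (F_rho D s)
         (s' ◁ cp D') (F_lam C' D' s' phi') (F_rho D' s')
         alpha beta (F_sq D D' gamma beta))
    (* F preserves vertical identities and vertical composition of squares *)
 /\ (forall (D : comonoid) (s : poly),
       F_sq D D (pid s) (pid (cp D)) = pid (s ◁ cp D))
 /\ (forall (D D' D'' : comonoid) (s s' s'' : poly)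
       (gamma : pmap s s') (gamma' : pmap s' s'')
       (beta : pmap (cp D) (cp D')) (beta' : pmap (cp D') (cp D'')),
       F_sq D D'' (gamma' ∘ gamma) (beta' ∘ beta)
       = F_sq D' D'' gamma' beta' ∘ F_sq D D' gamma beta)
    (* compositor and unitor, natural and coherent *)
 /\ exists (iota : forall (C D E : comonoid)
                     (s : poly) (phi : pmap (s ◁ cp D) (cp C ◁ s))
                     (t : poly) (psi : pmap (t ◁ cp E) (cp D ◁ t)),
                     pmap ((s ◁ t) ◁ cp E) ((s ◁ cp D) ◁ (t ◁ cp E)))
           (eta : forall C : comonoid, pmap (cp C) (ypoly ◁ cp C))
           (eta_inv : forall C : comonoid, pmap (ypoly ◁ cp C) (cp C)),
    (* compositor: F(s ◁ t) is the horizontal composite F(s) ◁_D F(t) *)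
    (forall (C D E : comonoid)
       (s : poly) (phi : pmap (s ◁ cp D) (cp C ◁ s))
       (t : poly) (psi : pmap (t ◁ cp E) (cp D ◁ t)),
       IsComonoid C -> IsComonoid D -> IsComonoid E ->
       IsHandler C D s phi -> IsHandler D E t psi ->
       IsHComposite C D E
         (s ◁ cp D) (F_lam C D s phi) (F_rho D s)
         (t ◁ cp E) (F_lam D E t psi) (F_rho E t)
         ((s ◁ t) ◁ cp E) (F_lam C E (s ◁ t) (hcomp_phi C D E s phi t psi)) (F_rho E (s ◁ t))
         (iota C D E s phi t psi))
    (* unitor: invertible globular square  id_C  =>  F(y, id_C) *)
 /\ (forall C : comonoid, IsComonoid C ->
       eta C ∘ eta_inv C = pid (ypoly ◁ cp C) /\
       eta_inv C ∘ eta C = pid (cp C) /\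
       IsBicomodSquare C C C C
         (cp C) (cdel C) (cdel C)
         (ypoly ◁ cp C) (F_lam C C ypoly (hid_phi C)) (F_rho C ypoly)
         (pid (cp C)) (pid (cp C)) (eta C))
    (* naturality of the compositor w.r.t. horizontal composition of squares *)
 /\ (forall (C C' D D' E E' : comonoid)
       (s : poly) (phi : pmap (s ◁ cp D) (cp C ◁ s))
       (t : poly) (psi : pmap (t ◁ cp E) (cp D ◁ t))
       (s' : poly) (phi' : pmap (s' ◁ cp D') (cp C' ◁ s'))
       (t' : poly) (psi' : pmap (t' ◁ cp E') (cp D' ◁ t'))
       (alpha : pmap (cp C) (cp C')) (beta : pmap (cp D) (cp D'))
       (kappa : pmap (cp E) (cp E')) (gamma : pmap s s') (gamma' : pmap t t'),
       IsComonoid C -> IsComonoid C' -> IsComonoid D -> IsComonoid D' ->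
       IsComonoid E -> IsComonoid E' ->
       IsHandler C D s phi -> IsHandler D E t psi ->
       IsHandler C' D' s' phi' -> IsHandler D' E' t' psi' ->
       IsCofunctor C C' alpha -> IsCofunctor D D' beta -> IsCofunctor E E' kappa ->
       IsEffSquare C C' D D' s phi s' phi' alpha beta gamma ->
       IsEffSquare D D' E E' t psi t' psi' beta kappa gamma' ->
       iota C' D' E' s' phi' t' psi' ∘ F_sq E E' (gamma ⊲ gamma') kappa
       = (F_sq D D' gamma beta ⊲ F_sq E E' gamma' kappa) ∘ iota C D E s phi t psi)
    (* naturality of the unitor w.r.t. vertical morphisms *)
 /\ (forall (C C' : comonoid) (alpha : pmap (cp C) (cp C')),
       IsComonoid C -> IsComonoid C' -> IsCofunctor C C' alpha ->
       eta C' ∘ alpha = F_sq C C' (pid ypoly) alpha ∘ eta C)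
    (* associativity coherence *)
 /\ (forall (C D E G : comonoid)
       (s : poly) (phi : pmap (s ◁ cp D) (cp C ◁ s))
       (t : poly) (psi : pmap (t ◁ cp E) (cp D ◁ t))
       (u : poly) (chi : pmap (u ◁ cp G) (cp E ◁ u)),
       IsComonoid C -> IsComonoid D -> IsComonoid E -> IsComonoid G ->
       IsHandler C D s phi -> IsHandler D E t psi -> IsHandler E G u chi ->
       (pid (s ◁ cp D) ⊲ iota D E G t psi u chi)
         ∘ iota C D G s phi (t ◁ u) (hcomp_phi D E G t psi u chi)
         ∘ F_sq G G (assoc s t u) (pid (cp G))
       = assoc (s ◁ cp D) (t ◁ cp E) (u ◁ cp G)
         ∘ (iota C D E s phi t psi ⊲ pid (u ◁ cp G))
         ∘ iota C E G (s ◁ t) (hcomp_phi C D E s phi t psi) u chi)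
    (* left unit coherence *)
 /\ (forall (C D : comonoid) (s : poly) (phi : pmap (s ◁ cp D) (cp C ◁ s)),
       IsComonoid C -> IsComonoid D -> IsHandler C D s phi ->
       F_sq D D (lunit s) (pid (cp D))
       = lunit (s ◁ cp D) ∘ (ceps C ⊲ pid (s ◁ cp D)) ∘ (eta_inv C ⊲ pid (s ◁ cp D))
         ∘ iota C C D ypoly (hid_phi C) s phi)
    (* right unit coherence *)
 /\ (forall (C D : comonoid) (s : poly) (phi : pmap (s ◁ cp D) (cp C ◁ s)),
       IsComonoid C -> IsComonoid D -> IsHandler C D s phi ->
       F_sq D D (runit s) (pid (cp D))
       = runit (s ◁ cp D) ∘ (pid (s ◁ cp D) ⊲ ceps D) ∘ (pid (s ◁ cp D) ⊲ eta_inv D)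
         ∘ iota C D D s phi ypoly (hid_phi D)) )
  (** (2) F is faithful on horizontal morphisms and squares between
      nonempty categories (d <> 0) *)
  /\ (forall (C C' D D' : comonoid)
        (s : poly) (phi : pmap (s ◁ cp D) (cp C ◁ s))
        (s' : poly) (phi' : pmap (s' ◁ cp D') (cp C' ◁ s'))
        (alpha alpha2 : pmap (cp C) (cp C')) (beta beta2 : pmap (cp D) (cp D'))
        (gamma gamma2 : pmap s s'),
        IsComonoid C -> IsComonoid C' -> IsComonoid D -> IsComonoid D' ->
        inhabited (pos (cp D)) -> inhabited (pos (cp D')) ->
        IsHandler C D s phi -> IsHandler C' D' s' phi' ->
        IsCofunctor C C' alpha -> IsCofunctor D D' beta ->
        IsCofunctor C C' alpha2 -> IsCofunctor D D' beta2 ->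
        IsEffSquare C C' D D' s phi s' phi' alpha beta gamma ->
        IsEffSquare C C' D D' s phi s' phi' alpha2 beta2 gamma2 ->
        alpha = alpha2 -> beta = beta2 ->
        F_sq D D' gamma beta = F_sq D D' gamma2 beta2 ->
        gamma = gamma2)
  (** (3) every (C,0)- and every (C,y)-bicomodule is in the essential image *)
  /\ (forall (C D : comonoid) (p : poly)
        (lam : pmap p (cp C ◁ p)) (rho : pmap p (p ◁ cp D)),
        D = zero_comonoid \/ D = y_comonoid ->
        IsComonoid C -> IsBicomodule C D p lam rho ->
        exists (s : poly) (phi : pmap (s ◁ cp D) (cp C ◁ s)),
          IsHandler C D s phi /\
          exists (g : pmap (s ◁ cp D) p) (g_inv : pmap p (s ◁ cp D)),
            g ∘ g_inv = pid p /\ g_inv ∘ g = pid (s ◁ cp D) /\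
            IsBicomodSquare C C D D
              (s ◁ cp D) (F_lam C D s phi) (F_rho D s) p lam rho
              (pid (cp C)) (pid (cp D)) g).
Proof.
  split; [| split].
  - split; [intros; apply F_bicomodule; assumption |].
    split; [intros; apply F_square; assumption |].
    split; [intros; apply tri_map_id |].
    split; [intros; symmetry; apply tri_map_comp |].
    exists (fun _ D E s _ t psi => F_compositor D E s t psi),
           (fun C => lunit_inv (cp C)), (fun C => lunit (cp C)).
    split; [intros; apply F_hcomp; assumption |].
    split; [intros; split; [apply lunit_invK | split; [apply lunitK | apply F_unitor_square]] |].
    split; [intros; eapply F_compositor_nat; eassumption |].
    split; [intros; apply lunit_inv_nat |].
    split; [intros; apply F_assoc_coherence; assumption |].
    split; [intros; apply F_lunit_coherence; assumption |].
    intros; apply F_runit_coherence; assumption.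
  - intros C C' D D' s phi s' phi' alpha alpha2 beta beta2 gamma gamma2
      _ _ _ _ [d0] _ _ _ _ _ _ _ _ _ _ -> Hsq.
    exact (tri_map_inj_l s s' (cp D) (cp D') d0 (ceps D') beta2 gamma gamma2 Hsq).
  - intros C D p lam rho [-> | ->] _.
    + apply zero_bicomodule_essential_image.
    + apply y_bicomodule_essential_image.
Qed.
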